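(* Let $G$ and $H$ be two nontrivial connected graphs. Then $hn_{cc}(G\boxtimes H)=2$.
   Context: All graphs are finite, simple and undirected. For a graph $G$ and $S\subseteq V(G)$, the cycle interval $\langle S\rangle$ consists of the vertices of $S$ together with every vertex $w\in V(G)\setminus S$ such that the induced subgraph $G[S\cup\{w\}]$ contains a cycle through $w$. $S$ is cycle convex if $\langle S\rangle=S$. The cycle convex hull $\langle S\rangle_C$ is the smallest cycle convex set containing $S$. A set $S$ is a (cycle) hull set if $\langle S\rangle_C=V(G)$, and the cycle hull number $hn_{cc}(G)$ is the minimum cardinality of a hull set. The strong product $G\boxtimes H$ has vertex set $V(G)\times V(H)$, with $(g_1,h_1)\sim(g_2,h_2)$ iff ($g_1\sim g_2$ and $h_1=h_2$) or ($g_1=g_2$ and $h_1\sim h_2$) or ($g_1\sim g_2$ and $h_1\sim h_2$). A graph is nontrivial if it has at least two vertices. *)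

From mathcomp Require Import all_boot.
From mathcomp Require Import boolp.
Set Implicit Arguments. Unset Strict Implicit. Unset Printing Implicit Defensive.

Definition simple_graph (T : finType) (e : rel T) : Prop :=
  symmetric e /\ irreflexive e.

Definition nontrivial (T : finType) : Prop := 1 < #|T|.

Definition connected_graph (T : finType) (e : rel T) : Prop :=
  forall x y : T, connect e x y.

Definition induced (T : finType) (e : rel T) (A : {set T}) : rel T :=
  fun x y => [&& x \in A, y \in A & e x y].

Definition is_graph_cycle (T : finType) (r : rel T) (c : seq T) : bool :=
  [&& 2 < size c, uniq c & cycle r c].

Definition cycle_through (T : finType) (e : rel T) (A : {set T}) (w : T) : Prop :=
  exists c : seq T, is_graph_cycle (induced e A) c /\ w \in c.

Definition cycle_interval (T : finType) (e : rel T) (S : {set T}) : {set T} :=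
  S :|: [set w | (w \notin S) &&
                 `[< cycle_through e (w |: S) w >]].

Definition cycle_convex (T : finType) (e : rel T) (S : {set T}) : Prop :=
  cycle_interval e S = S.

Definition cycle_hull (T : finType) (e : rel T) (S : {set T}) : {set T} :=
  \bigcap_(C : {set T} | (S \subset C) && `[< cycle_convex e C >]) C.

Definition hull_set (T : finType) (e : rel T) (S : {set T}) : Prop :=
  cycle_hull e S = [set: T].

(* cycle hull number: minimum cardinality of a hull set (V(G) is always one) *)
Definition hn_cc (T : finType) (e : rel T) : nat :=
  \big[minn/#|T|]_(S : {set T} | `[< hull_set e S >]) #|S|.

Definition strong_prod (T1 T2 : finType) (e1 : rel T1) (e2 : rel T2)
  : rel (T1 * T2) :=
  fun x y =>
    [|| e1 x.1 y.1 && (x.2 == y.2),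
        (x.1 == y.1) && e2 x.2 y.2 |
        e1 x.1 y.1 && e2 x.2 y.2].

(* A set with at most one vertex is cycle convex, since adding one vertex
   leaves too few vertices for a cycle; hence every hull set of a graph with
   at least two vertices has at least two elements.  Conversely, take edges
   u1v1 of G and u2v2 of H.  A cycle convex set C containing two adjacent
   vertices contains every common neighbour of them (they span a triangle),
   so if C contains (u1,u2) and (v1,v2) it contains the whole square
   {u1,v1} x {u2,v2}.  Such a square {x,x'} x {y,y'} in C spreads along any
   edge x'z of G to {x',z} x {y,y'}, and likewise along edges of H, so by
   connectivity C is everything: {(u1,u2), (v1,v2)} is a hull set. *)

From HB Require Import structures.
From mathcomp Require Import all_boot boolp.
Set Implicit Arguments. Unset Strict Implicit.

HB.instance Definition _ := SemiGroup.isComLaw.Build nat minn minnA minnC.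

Lemma connected_exists_edge (T : finType) (e : rel T) :
  nontrivial T -> connected_graph e -> exists u v, e u v.
Proof.
move=> /card_gt1P[x [y [_ _ neq_xy]]] /(_ x y) /connectP[[|z p] /= pxp eq_y].
  by rewrite eq_y eqxx in neq_xy.
by exists x, z; case/andP: pxp.
Qed.

Lemma connect_edge_invariant (T : finType) (e : rel T) (P : T -> T -> Prop) x x' :
    (forall a b c, e a b -> P a b -> e b c -> P b c) -> e x x' -> P x x' ->
  forall z, connect e x' z -> exists2 s, e s z & P s z.
Proof.
move=> step exx' Pxx' z /connectP[p].
elim: p x x' exx' Pxx' => [|c p IH] x x' exx' Pxx' /=.
  by move=> _ ->; exists x.
by case/andP=> ex'c pcp; apply: IH pcp; last exact: step Pxx' ex'c.
Qed.

Section CycleHull.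
Variables (T : finType) (e : rel T).

Lemma hn_cc_le (S : {set T}) : hull_set e S -> hn_cc e <= #|S|.
Proof. by move=> hullS; rewrite /hn_cc (bigD1 S) ?geq_minl //=; apply/asboolP. Qed.

Lemma hn_cc_ge n :
  n <= #|T| -> (forall S : {set T}, hull_set e S -> n <= #|S|) -> n <= hn_cc e.
Proof.
move=> leT leS; apply: (big_ind (leq n)) => // [a b na nb|S /asboolP].
  by rewrite leq_min na nb.
exact: leS.
Qed.

Lemma cycle_hull_min (S C : {set T}) :
  S \subset C -> cycle_convex e C -> cycle_hull e S \subset C.
Proof. by move=> sSC convC; apply: bigcap_inf; rewrite sSC; apply/asboolP. Qed.

Lemma mem_cycle_hull (S : {set T}) x :
    (forall C : {set T}, S \subset C -> cycle_convex e C -> x \in C) ->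
  x \in cycle_hull e S.
Proof. by move=> inC; apply/bigcapP => C /andP[sSC /asboolP]; apply: inC. Qed.

Lemma cycle_convex_card_lt2 (S : {set T}) : #|S| < 2 -> cycle_convex e S.
Proof.
move=> smallS; apply/setP => w; rewrite /cycle_interval !inE.
apply/orP/idP => [[//|]|]; last by left.
case/andP=> wS /asboolP[c [/and3P[size_c uniq_c cycle_c] _]].
have sub_c : c \subset w |: S.
  by apply/subsetP => y /(next_cycle cycle_c) /and3P[].
have := subset_leq_card sub_c; rewrite (card_uniqP uniq_c) cardsU1 wS.
by move=> /(leq_trans size_c); rewrite ltnS leqNgt smallS.
Qed.

Lemma hull_set_card_gt1 (S : {set T}) : 1 < #|T| -> hull_set e S -> 1 < #|S|.
Proof.
move=> bigT hullS; rewrite ltnNge; apply/negP => smallS.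
have : [set: T] \subset S.
  by rewrite -hullS; apply: cycle_hull_min; last exact: cycle_convex_card_lt2.
by move/subset_leq_card; rewrite cardsT => /(leq_trans bigT); rewrite ltnNge smallS.
Qed.

Lemma cycle_convex_triangle (C : {set T}) a b w : irreflexive e ->
  cycle_convex e C -> a \in C -> b \in C -> e a b -> e b w -> e w a -> w \in C.
Proof.
move=> irr_e convC aC bC eab ebw ewa; apply/negPn/negP => wC.
suff : w \in cycle_interval e C by rewrite convC (negbTE wC).
rewrite /cycle_interval !inE (negbTE wC) /=; apply/asboolP; exists [:: a; b; w].
split; last by rewrite !inE eqxx !orbT.
have neq_aw : a != w by apply: contraNneq wC => <-.
have neq_bw : b != w by apply: contraNneq wC => <-.
have neq_ab : a != b by apply: contraTneq eab => ->; rewrite irr_e.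
rewrite /is_graph_cycle /induced /= !inE negb_or neq_ab neq_aw neq_bw.
by rewrite aC bC eqxx !orbT eab ebw ewa.
Qed.

End CycleHull.

Section StrongProduct.
Variables (T1 T2 : finType) (e1 : rel T1) (e2 : rel T2).
Hypotheses (sym1 : symmetric e1) (sym2 : symmetric e2).
Hypotheses (irr1 : irreflexive e1) (irr2 : irreflexive e2).
Local Notation E := (strong_prod e1 e2).

Lemma strong_prod_irr : irreflexive E.
Proof. by move=> [x y]; rewrite /strong_prod /= irr1 irr2 andbF. Qed.

Lemma strong_prod1 x x' y : e1 x x' -> E (x, y) (x', y).
Proof. by move=> exx'; rewrite /strong_prod /= exx' eqxx. Qed.

Lemma strong_prod2 x y y' : e2 y y' -> E (x, y) (x, y').
Proof. by move=> eyy'; rewrite /strong_prod /= eyy' eqxx orbT. Qed.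

Lemma strong_prod12 x x' y y' : e1 x x' -> e2 y y' -> E (x, y) (x', y').
Proof. by move=> exx' eyy'; rewrite /strong_prod /= exx' eyy' !orbT. Qed.

Section ConvexSet.
Variable C : {set T1 * T2}.
Hypothesis convC : cycle_convex E C.

Definition corners_in x x' y y' :=
  [&& (x, y) \in C, (x, y') \in C, (x', y) \in C & (x', y') \in C].

Let triangle a b w := @cycle_convex_triangle _ _ C a b w strong_prod_irr convC.

Lemma corners_in_diag x x' y y' : (x, y) \in C -> (x', y') \in C ->
  e1 x x' -> e2 y y' -> corners_in x x' y y'.
Proof.
move=> xyC xy'C exx' eyy'; rewrite /corners_in xyC xy'C andbT /=.
have ex'x : e1 x' x by rewrite sym1.
have ey'y : e2 y' y by rewrite sym2.
apply/andP; split.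
- exact: triangle xyC xy'C (strong_prod12 exx' eyy') (strong_prod1 _ ex'x) (strong_prod2 _ ey'y).
- exact: triangle xyC xy'C (strong_prod12 exx' eyy') (strong_prod2 _ ey'y) (strong_prod1 _ ex'x).
Qed.

Lemma corners_in_step1 x x' y y' z :
  corners_in x x' y y' -> e2 y y' -> e1 x' z -> corners_in x' z y y'.
Proof.
move=> /and4P[_ _ x'yC x'y'C] eyy' ex'z; rewrite /corners_in x'yC x'y'C /=.
have ezx' : e1 z x' by rewrite sym1.
have ey'y : e2 y' y by rewrite sym2.
apply/andP; split.
- exact: triangle x'yC x'y'C (strong_prod2 _ eyy') (strong_prod12 ex'z ey'y) (strong_prod1 _ ezx').
- exact: triangle x'y'C x'yC (strong_prod2 _ ey'y) (strong_prod12 ex'z eyy') (strong_prod1 _ ezx').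
Qed.

Lemma corners_in_step2 x x' y y' z :
  corners_in x x' y y' -> e1 x x' -> e2 y' z -> corners_in x x' y' z.
Proof.
move=> /and4P[_ xy'C _ x'y'C] exx' ey'z; rewrite /corners_in xy'C x'y'C /=.
have ezy' : e2 z y' by rewrite sym2.
have ex'x : e1 x' x by rewrite sym1.
apply/andP; split.
- exact: triangle xy'C x'y'C (strong_prod1 _ exx') (strong_prod12 ex'x ey'z) (strong_prod2 _ ezy').
- exact: triangle x'y'C xy'C (strong_prod1 _ ex'x) (strong_prod12 exx' ey'z) (strong_prod2 _ ezy').
Qed.

Lemma corners_in_all u1 v1 u2 v2 :
    connected_graph e1 -> connected_graph e2 -> e1 u1 v1 -> e2 u2 v2 ->
  (u1, u2) \in C -> (v1, v2) \in C -> C = [set: T1 * T2].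
Proof.
move=> conn1 conn2 euv1 euv2 uC vC; apply/setP => [[x y]]; rewrite inE.
have [s esx corners_sx] := connect_edge_invariant (P := fun a b => corners_in a b u2 v2)
  (fun _ _ _ _ cab ebc => corners_in_step1 cab euv2 ebc)
  euv1 (corners_in_diag uC vC euv1 euv2) (conn1 v1 x).
have [t _ corners_ty] := connect_edge_invariant (P := corners_in s x)
  (fun _ _ _ _ cab ebc => corners_in_step2 cab esx ebc) euv2 corners_sx (conn2 v2 y).
by case/and4P: corners_ty.
Qed.

End ConvexSet.

Lemma strong_prod_hull_set u1 v1 u2 v2 :
    connected_graph e1 -> connected_graph e2 -> e1 u1 v1 -> e2 u2 v2 ->
  hull_set E [set (u1, u2); (v1, v2)].
Proof.
move=> conn1 conn2 euv1 euv2; apply/setP => xy; rewrite inE.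
apply: mem_cycle_hull => C /subsetP sub_C convC.
rewrite (corners_in_all convC conn1 conn2 euv1 euv2) ?inE //.
  by apply: sub_C; rewrite !inE eqxx.
by apply: sub_C; rewrite !inE eqxx orbT.
Qed.

End StrongProduct.

Theorem mainTheorem1 (T1 T2 : finType) (e1 : rel T1) (e2 : rel T2) :
  simple_graph e1 -> simple_graph e2 ->
  nontrivial T1 -> nontrivial T2 ->
  connected_graph e1 -> connected_graph e2 ->
  hn_cc (strong_prod e1 e2) = 2.
Proof.
move=> [sym1 irr1] [sym2 irr2] big1 big2 conn1 conn2.
have [u1 [v1 euv1]] := connected_exists_edge big1 conn1.
have [u2 [v2 euv2]] := connected_exists_edge big2 conn2.
have big12 : 1 < #|{: T1 * T2}|.
  by rewrite card_prod (leq_trans _ (leq_mul big1 big2)).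
have card_uv : #|[set (u1, u2); (v1, v2)]| = 2.
  by rewrite cards2; case: eqP => // [[eq_uv1 _]]; rewrite eq_uv1 irr1 in euv1.
have hull_uv := strong_prod_hull_set sym1 sym2 irr1 irr2 conn1 conn2 euv1 euv2.
apply/eqP; rewrite eqn_leq -{1}card_uv hn_cc_le //=.
by apply: hn_cc_ge => // S; apply: hull_set_card_gt1 big12.
Qed.
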